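(* Let $n\ge 3$ and let $\beta\in B_n(D)$ be such that $\pi(\beta)$ is a transposition. Then the subgroup $H_\beta=\langle P_n(D),\beta\rangle$ of $B_n(D)$ is not bi-orderable.
   Context: $B_n(D)$ is the Artin braid group on $n$ strands, with generators $\sigma_1,\dots,\sigma_{n-1}$ and relations $\sigma_i\sigma_j=\sigma_j\sigma_i$ for $|i-j|\ge 2$ and $\sigma_i\sigma_{i+1}\sigma_i=\sigma_{i+1}\sigma_i\sigma_{i+1}$. The permutation homomorphism $\pi: B_n(D)\to S_n$ is given by $\pi(\sigma_i)=(i,i+1)$, and $P_n(D)=\ker\pi$. $H_\beta=\langle P_n(D),\beta\rangle$ is the subgroup generated by $P_n(D)$ and $\beta$. A group is bi-orderable if it admits a strict total ordering invariant under both left and right multiplication. *)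

(* braid groups via their Artin presentation,
   represented as words modulo the congruence generated by the relations. *)
From mathcomp Require Import all_boot.
Set Implicit Arguments. Unset Strict Implicit. Unset Printing Implicit Defensive.

(* A letter (i, true) is sigma_i, (i, false) is sigma_i^{-1}. *)
Definition letter := (nat * bool)%type.
Definition word := seq letter.

Definition valid_word (n : nat) (w : word) : bool :=
  all (fun g : letter => (0 < g.1) && (g.1 < n)) w.

(* Group operations on words: product = concatenation, identity = [::],
   inverse = reversed word with inverted letters. *)
Definition winv (w : word) : word := rev (map (fun g : letter => (g.1, ~~ g.2)) w).

Inductive beq (n : nat) : word -> word -> Prop :=
| beq_refl w : beq n w w
| beq_sym u v : beq n u v -> beq n v u
| beq_trans u v w : beq n u v -> beq n v w -> beq n u w
| beq_ctx a u v b : valid_word n a -> valid_word n b ->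
    beq n u v -> beq n (a ++ u ++ b) (a ++ v ++ b)
| beq_free i s : (0 < i < n)%N -> beq n [:: (i, s); (i, ~~ s)] [::]
| beq_comm i j : (0 < i < n)%N -> (0 < j < n)%N ->
    (i + 2 <= j)%N \/ (j + 2 <= i)%N ->
    beq n [:: (i, true); (j, true)] [:: (j, true); (i, true)]
| beq_braid i : (0 < i)%N -> (i.+1 < n)%N ->
    beq n [:: (i, true); (i.+1, true); (i, true)]
          [:: (i.+1, true); (i, true); (i.+1, true)].

Definition transp (a b : nat) : nat -> nat :=
  fun x => if x == a then b else if x == b then a else x.

(* The permutation homomorphism pi : B_n(D) -> S_n, with pi(sigma_i) = (i,i+1),
   permutations of {1..n} viewed as functions nat -> nat fixing everything else. *)
Definition perm_of_word (w : word) : nat -> nat :=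
  foldr (fun (g : letter) f => transp g.1 g.1.+1 \o f) id w.

Definition is_transposition (n : nat) (f : nat -> nat) : Prop :=
  exists a b, [/\ (1 <= a)%N, (a < b)%N, (b <= n)%N & forall x, f x = transp a b x].

Definition pure (n : nat) (w : word) : Prop :=
  valid_word n w /\ forall x, perm_of_word w x = x.

Inductive Hsub (n : nat) (beta : word) : word -> Prop :=
| H_pure w : pure n w -> Hsub n beta w
| H_beta : Hsub n beta beta
| H_inv w : Hsub n beta w -> Hsub n beta (winv w)
| H_mul u v : Hsub n beta u -> Hsub n beta v -> Hsub n beta (u ++ v)
| H_beq u v : Hsub n beta u -> beq n u v -> Hsub n beta v.

Definition biorderable (n : nat) (H : word -> Prop) : Prop :=
  exists lt : word -> word -> Prop,
  [/\ (forall u u' v v', H u -> H v -> beq n u u' -> beq n v v' -> lt u v -> lt u' v'),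
      (forall u, H u -> ~ lt u u),
      (forall u v w, H u -> H v -> H w -> lt u v -> lt v w -> lt u w),
      (forall u v, H u -> H v -> [\/ beq n u v, lt u v | lt v u])
    & (forall u v g, H u -> H v -> H g -> lt u v ->
         lt (g ++ u) (g ++ v) /\ lt (u ++ g) (v ++ g))].

(* Conjugating beta, we may assume pi(beta) = (1 2).  Then sigma_1 lies in H_beta, since
   beta sigma_1^-1 is pure, and so does the pure braid sigma_2^2.  The elements
   x = sigma_1 sigma_2^2 and y = sigma_2^2 sigma_1 have the same square by the braid
   relation, yet they are distinct: the signed number of crossings between the strands
   starting at 1 and 3 is 2 for x and 0 for y, and this number is invariant under the
   relations.  In a bi-ordered group x < y forces x^2 < x y < y^2, so squaring is
   injective, a contradiction. *)
From Stdlib Require Import ZArith Lia.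
From mathcomp Require Import all_boot zify.
Set Implicit Arguments. Unset Strict Implicit. Unset Printing Implicit Defensive.

Ltac eq_cases :=
  let noif t := lazymatch t with context[if _ then _ else _] => fail | _ => idtac end in
  repeat match goal with
  | |- context[?a == ?b] => noif a; noif b;
      case: (@eqP nat a b) => ? /=; try (exfalso; lia)
  end; try lia.

Definition swap (g : letter) : nat -> nat := transp g.1 g.1.+1.

Fixpoint strand_end (w : word) (p : nat) : nat :=
  if w is g :: w' then strand_end w' (swap g p) else p.

Definition crossing_sign (g : letter) (p q : nat) : Z :=
  if ((p == g.1) && (q == g.1.+1)) || ((p == g.1.+1) && (q == g.1))
  then (if g.2 then 1 else -1)%Z else 0%Z.

Fixpoint crossings (w : word) (p q : nat) : Z :=
  if w is g :: w' then (crossing_sign g p q + crossings w' (swap g p) (swap g q))%Z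
  else 0%Z.

Lemma strand_end_cat u v p : strand_end (u ++ v) p = strand_end v (strand_end u p).
Proof. by elim: u p => //= g u IH p. Qed.

Lemma crossings_cat u v p q :
  crossings (u ++ v) p q = (crossings u p q + crossings v (strand_end u p) (strand_end u q))%Z.
Proof. elim: u p q => //= g u IH p q; rewrite IH; lia. Qed.

Lemma beq_strand_end n u v : beq n u v -> strand_end u =1 strand_end v.
Proof.
elim=> {u v} //.
- by move=> u v _ E p; rewrite E.
- by move=> u v w _ E1 _ E2 p; rewrite E1 E2.
- by move=> a u v b _ _ _ E p; rewrite !strand_end_cat E.
- by move=> i [] _ p /=; rewrite /swap /transp /=; eq_cases.
- by move=> i j _ _ ij p /=; rewrite /swap /transp /=; eq_cases.
- by move=> i _ _ p /=; rewrite /swap /transp /=; eq_cases.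
Qed.

Lemma beq_crossings n u v : beq n u v -> forall p q, crossings u p q = crossings v p q.
Proof.
elim=> {u v} //.
- by move=> u v w _ E1 _ E2 p q; rewrite E1 E2.
- move=> a u v b _ _ Euv E p q.
  by rewrite !crossings_cat E !(beq_strand_end Euv).
- by move=> i [] _ p q /=; rewrite /swap /crossing_sign /transp /=; eq_cases.
- by move=> i j _ _ ij p q /=; rewrite /swap /crossing_sign /transp /=; eq_cases.
- by move=> i _ _ p q /=; rewrite /swap /crossing_sign /transp /=; eq_cases.
Qed.

Lemma winv_cat u v : winv (u ++ v) = winv v ++ winv u.
Proof. by rewrite /winv map_cat rev_cat. Qed.

Lemma winv_cons g u : winv (g :: u) = winv u ++ [:: (g.1, ~~ g.2)].
Proof. by rewrite /winv /= rev_cons cats1. Qed.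

Lemma winvK : involutive winv.
Proof. by elim=> //= g u IH; rewrite winv_cons winv_cat IH /= negbK; case: g. Qed.

Lemma valid_cat n u v : valid_word n (u ++ v) = valid_word n u && valid_word n v.
Proof. exact: all_cat. Qed.

Lemma valid_winv n u : valid_word n (winv u) = valid_word n u.
Proof. by rewrite /valid_word /winv all_rev all_map. Qed.

Lemma valid_letter n i s : valid_word n [:: (i, s)] = (0 < i < n).
Proof. by rewrite /valid_word /= andbT. Qed.

Lemma beq_valid n u v : beq n u v -> valid_word n u = valid_word n v.
Proof.
elim=> {u v} //.
- by move=> u v w _ -> _ ->.
- by move=> a u v b _ _ _ E; rewrite !valid_cat E.
- by move=> i s Hi; rewrite /valid_word /= Hi.
- by move=> i j Hi Hj _; rewrite /valid_word /= Hi Hj.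
- by move=> i i_gt0 lt_i1n; rewrite /valid_word /= i_gt0 lt_i1n ltnW.
Qed.

Lemma beq_cat n u u' v v' : valid_word n u' -> valid_word n v ->
  beq n u u' -> beq n v v' -> beq n (u ++ v) (u' ++ v').
Proof.
move=> Vu' Vv Eu Ev; apply: (beq_trans (v := u' ++ v)).
- exact: (@beq_ctx n [::] u u' v isT Vv Eu).
- by have := @beq_ctx n u' v v' [::] Vu' isT Ev; rewrite !cats0.
Qed.

Lemma beq_mulV n u : valid_word n u -> beq n (u ++ winv u) [::].
Proof.
elim: u => [|g u IH] /=; first by move=> _; apply: beq_refl.
case: g => i s /andP[Vi Vu]; rewrite winv_cons.
apply: (beq_trans (v := [:: (i, s)] ++ [::] ++ [:: (i, ~~ s)])); last exact: beq_free.
have Vis : valid_word n [:: (i, s)] by rewrite valid_letter.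
have Vis' : valid_word n [:: (i, ~~ s)] by rewrite valid_letter.
by have := beq_ctx Vis Vis' (IH Vu); rewrite /= catA.
Qed.

Lemma beq_cancel_middle n u v : valid_word n u -> valid_word n v ->
  beq n (u ++ v ++ winv v) u.
Proof.
move=> Vu Vv; have := @beq_ctx n u _ _ [::] Vu isT (beq_mulV Vv).
by rewrite !cats0.
Qed.

Lemma Hsub_valid n beta w : valid_word n beta -> Hsub n beta w -> valid_word n w.
Proof.
move=> Vb; elim=> //.
- by move=> u [].
- by move=> u _; rewrite valid_winv.
- by move=> u v _ Vu _ Vv; rewrite valid_cat Vu Vv.
- by move=> u v _ Vu /beq_valid <-.
Qed.

Lemma perm_of_word_cat u v x :
  perm_of_word (u ++ v) x = perm_of_word u (perm_of_word v x).
Proof. by elim: u => //= g u ->. Qed.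

Lemma transpK a b : involutive (transp a b).
Proof. by move=> x; rewrite /transp; eq_cases. Qed.

Lemma perm_of_wordVK u : cancel (perm_of_word u) (perm_of_word (winv u)).
Proof. by elim: u => //= g u IH x; rewrite winv_cons perm_of_word_cat /= transpK IH. Qed.

Lemma biorderable_pullback n (H K : word -> Prop) (f : word -> word) :
  (forall u v, H u -> H v -> H (u ++ v)) ->
  (forall u, K u -> H (f u)) ->
  (forall u v, beq n u v -> beq n (f u) (f v)) ->
  (forall u v, K u -> K v -> beq n (f u) (f v) -> beq n u v) ->
  (forall u v, K u -> K v -> beq n (f (u ++ v)) (f u ++ f v)) ->
  biorderable n H -> biorderable n K.
Proof.
move=> Hmul fK fbeq finj fmul [lt [lt_beq ltxx lt_trans lt_total lt_mul]].
exists (fun u v => lt (f u) (f v)); split.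
- by move=> u u' v v' Ku Kv /fbeq Eu /fbeq Ev; apply: lt_beq Eu Ev; apply: fK.
- by move=> u Ku; apply: ltxx; apply: fK.
- by move=> u v w Ku Kv Kw; apply: lt_trans; apply: fK.
- move=> u v Ku Kv; case: (lt_total _ _ (fK _ Ku) (fK _ Kv)) => [E|L|L].
  + by apply: Or31; apply: finj.
  + exact: Or32.
  + exact: Or33.
- move=> u v g Ku Kv Kg L.
  have [Hu Hv Hg] := And3 (fK _ Ku) (fK _ Kv) (fK _ Kg).
  have [Ll Lr] := lt_mul _ _ _ Hu Hv Hg L.
  split.
  + apply: lt_beq Ll; [exact: Hmul | exact: Hmul | |];
      by apply: beq_sym; apply: fmul.
  + apply: lt_beq Lr; [exact: Hmul | exact: Hmul | |];
      by apply: beq_sym; apply: fmul.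
Qed.

Definition conj_word (w u : word) : word := winv w ++ u ++ w.

Lemma valid_conj_word n w u :
  valid_word n (conj_word w u) = valid_word n w && valid_word n u.
Proof. by rewrite /conj_word !valid_cat valid_winv; case: (valid_word n w); rewrite ?andbT. Qed.

Lemma beq_conj_word n w u v :
  valid_word n w -> beq n u v -> beq n (conj_word w u) (conj_word w v).
Proof. by move=> Vw; apply: beq_ctx; rewrite ?valid_winv. Qed.

Lemma conj_word_cat n w u v : valid_word n w -> valid_word n u -> valid_word n v ->
  beq n (conj_word w u ++ conj_word w v) (conj_word w (u ++ v)).
Proof.
move=> Vw Vu Vv; rewrite /conj_word.
have -> : (winv w ++ u ++ w) ++ winv w ++ v ++ w = (winv w ++ u) ++ (w ++ winv w) ++ (v ++ w)
  by rewrite -!catA.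
have -> : winv w ++ (u ++ v) ++ w = (winv w ++ u) ++ [::] ++ (v ++ w) by rewrite -!catA.
by apply: beq_ctx; rewrite ?valid_cat ?valid_winv ?Vw ?Vu ?Vv //; apply: beq_mulV.
Qed.

Lemma conj_wordK n w u : valid_word n w -> valid_word n u ->
  beq n (w ++ conj_word w u ++ winv w) u.
Proof.
move=> Vw Vu; rewrite /conj_word -!catA catA.
apply: (@beq_cat n _ [::] _ u) => //; first by rewrite !valid_cat valid_winv Vw Vu.
- exact: beq_mulV.
- exact: beq_cancel_middle.
Qed.

Lemma Hsub_conj n beta w u : valid_word n w -> valid_word n beta ->
  Hsub n (w ++ beta ++ winv w) u -> Hsub n beta (conj_word w u).
Proof.
move=> Vw Vb.
have Vb' : valid_word n (w ++ beta ++ winv w) by rewrite !valid_cat valid_winv Vw Vb.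
elim=> {u}.
- move=> u [Vu pure_u]; apply: H_pure; split; first by rewrite valid_conj_word Vw.
  by move=> x; rewrite /conj_word !perm_of_word_cat pure_u perm_of_wordVK.
- apply: H_beq (H_beta _ _) _; apply: beq_sym.
  have := @conj_wordK n (winv w) beta; rewrite /conj_word winvK valid_winv.
  exact.
- by move=> u _ /H_inv; rewrite /conj_word !winv_cat winvK -catA.
- move=> u v Ku Hu Kv Hv; apply: H_beq (H_mul Hu Hv) _.
  by apply: conj_word_cat => //; apply: Hsub_valid Vb' _.
- by move=> u v _ Hu E; apply: H_beq Hu _; apply: beq_conj_word.
Qed.

Lemma biorderable_conj n beta w : valid_word n w -> valid_word n beta ->
  biorderable n (Hsub n beta) -> biorderable n (Hsub n (w ++ beta ++ winv w)).
Proof.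
move=> Vw Vb.
have Vb' : valid_word n (w ++ beta ++ winv w) by rewrite !valid_cat valid_winv Vw Vb.
apply: (biorderable_pullback (f := conj_word w)).
- exact: H_mul.
- by move=> u; apply: Hsub_conj.
- by move=> u v; apply: beq_conj_word.
- move=> u v /(Hsub_valid Vb') Vu /(Hsub_valid Vb') Vv E.
  apply: beq_trans (beq_sym (conj_wordK Vw Vu)) _.
  apply: beq_trans (conj_wordK Vw Vv); apply: beq_ctx; rewrite ?valid_winv //.
- move=> u v /(Hsub_valid Vb') Vu /(Hsub_valid Vb') Vv.
  exact/beq_sym/conj_word_cat.
Qed.

Lemma biorderable_sqr_inj n (H : word -> Prop) u v :
  (forall u v, H u -> H v -> H (u ++ v)) -> biorderable n H ->
  H u -> H v -> beq n (u ++ u) (v ++ v) -> beq n u v.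
Proof.
move=> Hmul [lt [lt_beq ltxx lt_trans lt_total lt_mul]] Hu Hv E.
have lt_sqr x y : H x -> H y -> lt x y -> lt (x ++ x) (y ++ y).
  move=> Hx Hy Lxy.
  have [Lxx _] := lt_mul _ _ _ Hx Hy Hx Lxy.
  have [_ Lyy] := lt_mul _ _ _ Hx Hy Hy Lxy.
  exact: lt_trans (Hmul _ _ Hx Hx) (Hmul _ _ Hx Hy) (Hmul _ _ Hy Hy) Lxx Lyy.
have [Huu Hvv] := conj (Hmul _ _ Hu Hu) (Hmul _ _ Hv Hv).
case: (lt_total _ _ Hu Hv) => [// | L | L]; exfalso; apply: (ltxx _ Hvv).
- exact: lt_beq Huu Hvv E (beq_refl _ _) (lt_sqr _ _ Hu Hv L).
- exact: lt_beq Hvv Huu (beq_refl _ _) E (lt_sqr _ _ Hv Hu L).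
Qed.

Section Generators.

Variables (n i : nat).

Let a : letter := (i, true).
Let b : letter := (i.+1, true).

(* The strands starting at [i] and [i+2] cross twice in the first word, never in the second. *)
Lemma braid_sqr_neq : ~ beq n [:: a; b; b] [:: b; b; a].
Proof.
move=> /beq_crossings /(_ i i.+2).
by rewrite /= /crossing_sign /swap /transp /=; eq_cases.
Qed.

Hypotheses (i_gt0 : 0 < i) (lt_i1n : i.+1 < n).

Lemma braid_sqr_eq :
  beq n ([:: a; b; b] ++ [:: a; b; b]) ([:: b; b; a] ++ [:: b; b; a]).
Proof.
have lt_in : i < n by apply: ltnW.
have Va : valid_word n [:: a] by rewrite /valid_word /= i_gt0 lt_in.
have Vb : valid_word n [:: b] by rewrite /valid_word /= lt_i1n.
have Vab : valid_word n [:: a; b] by rewrite /valid_word /= i_gt0 lt_in lt_i1n.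
have Vba : valid_word n [:: b; a] by rewrite /valid_word /= i_gt0 lt_in lt_i1n.
have Vbab : valid_word n [:: b; a; b] by rewrite /valid_word /= i_gt0 lt_in lt_i1n.
have aba : beq n [:: a; b; a] [:: b; a; b] by apply: beq_braid.
apply: (beq_trans (v := [:: a; b; a; b; a; b])).
  exact: (beq_ctx (a := [:: a; b]) (b := [:: b]) Vab Vb (beq_sym aba)).
apply: (beq_trans (v := [:: b; a; b; b; a; b])).
  exact: (beq_ctx (a := [::]) (b := [:: b; a; b]) isT Vbab aba).
apply: (beq_trans (v := [:: b; a; b; a; b; a])).
  exact: (beq_ctx (a := [:: b; a; b]) (b := [::]) Vbab isT (beq_sym aba)).
exact: (beq_ctx (a := [:: b]) (b := [:: b; a]) Vb Vba aba).
Qed.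

End Generators.

Lemma Hsub_sqr_letter n beta i : 0 < i < n -> Hsub n beta [:: (i, true); (i, true)].
Proof.
move=> lim; apply: H_pure; split; first by rewrite /valid_word /= lim.
by move=> x; rewrite /= transpK.
Qed.

Lemma Hsub_letter n beta i : 0 < i < n -> valid_word n beta ->
  perm_of_word beta =1 transp i i.+1 -> Hsub n beta [:: (i, true)].
Proof.
move=> lim Vb Pb.
have Vi : valid_word n [:: (i, true)] by rewrite valid_letter.
have pure_bi : pure n (beta ++ [:: (i, false)]).
  split; first by rewrite valid_cat Vb valid_letter.
  by move=> x; rewrite perm_of_word_cat /= Pb transpK.
apply: H_beq (H_mul (H_inv (H_pure _ pure_bi)) (H_beta _ _)) _.
rewrite winv_cat -catA.
by have := @beq_cancel_middle n _ (winv beta) Vi; rewrite winvK valid_winv; apply.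
Qed.

Lemma Hsub_adjacent_transp_not_biorderable n beta i : 0 < i -> i.+1 < n ->
  valid_word n beta -> perm_of_word beta =1 transp i i.+1 ->
  ~ biorderable n (Hsub n beta).
Proof.
move=> i_gt0 lt_i1n Vb Pb ord.
have Ha : Hsub n beta [:: (i, true)] by apply: Hsub_letter; rewrite // i_gt0 ltnW.
have Hbb : Hsub n beta [:: (i.+1, true); (i.+1, true)] by apply: Hsub_sqr_letter.
apply: (@braid_sqr_neq n i).
exact: (biorderable_sqr_inj (@H_mul n beta) ord (H_mul Ha Hbb) (H_mul Hbb Ha)
          (braid_sqr_eq i_gt0 lt_i1n)).
Qed.

Definition conj_perm (w : word) (f : nat -> nat) : nat -> nat :=
  perm_of_word w \o f \o perm_of_word (winv w).

Lemma perm_of_word_conj w beta :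
  perm_of_word (w ++ beta ++ winv w) =1 conj_perm w (perm_of_word beta).
Proof. by move=> x; rewrite !perm_of_word_cat. Qed.

Lemma conj_perm_cat v w f : conj_perm (v ++ w) f =1 conj_perm v (conj_perm w f).
Proof. by move=> x; rewrite /conj_perm /= winv_cat !perm_of_word_cat. Qed.

Lemma eq_conj_perm w f g : f =1 g -> conj_perm w f =1 conj_perm w g.
Proof. by move=> fg x; rewrite /conj_perm /= fg. Qed.

Lemma transp_conj a b c d x :
  transp c d (transp a b (transp c d x)) = transp (transp c d a) (transp c d b) x.
Proof.
have tK := transpK c d.
rewrite [transp a b _]/transp [RHS]/transp -!(inv_eq tK).
by do 2![case: eqP => // _]; rewrite tK.
Qed.

Lemma conj_perm_letter c a b :
  conj_perm [:: (c, true)] (transp a b) =1 transp (transp c c.+1 a) (transp c c.+1 b).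
Proof. exact: transp_conj. Qed.

Lemma conj_transp1_to_transp12 n b : 1 < b <= n ->
  exists2 w, valid_word n w & conj_perm w (transp 1 b) =1 transp 1 2.
Proof.
elim: b => // b IH /andP[lt_1b le_bn].
have [b_le1 | lt_1b'] := leqP b 1.
  have -> : b = 1 by lia.
  by exists [::].
have [w Vw Ew] := IH (ltac:(lia) : 1 < b <= n).
exists (w ++ [:: (b, true)]); first by rewrite valid_cat Vw valid_letter; lia.
move=> x; rewrite conj_perm_cat -Ew; apply: eq_conj_perm => y.
by rewrite conj_perm_letter; congr transp; rewrite /transp; eq_cases.
Qed.

Lemma conj_transp_to_transp1 n a b : 0 < a < b -> b <= n ->
  exists2 w, valid_word n w & conj_perm w (transp a b) =1 transp 1 b.
Proof.
elim: a => // a IH /andP[_ lt_ab] le_bn.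
have [a0 | a_gt0] := posnP a; first by rewrite a0; exists [::].
have [w Vw Ew] := IH (ltac:(lia) : 0 < a < b) le_bn.
exists (w ++ [:: (a, true)]); first by rewrite valid_cat Vw valid_letter; lia.
move=> x; rewrite conj_perm_cat -Ew; apply: eq_conj_perm => y.
by rewrite conj_perm_letter; congr transp; rewrite /transp; eq_cases.
Qed.

Theorem mainTheorem8 (n : nat) (beta : word) :
  (3 <= n)%N -> valid_word n beta ->
  is_transposition n (perm_of_word beta) ->
  ~ biorderable n (Hsub n beta).
Proof.
move=> le3n Vb [a [b [le1a lt_ab le_bn Pb]]].
have [w Vw Ew] := @conj_transp_to_transp1 n a b (ltac:(lia)) le_bn.
have [v Vv Ev] := @conj_transp1_to_transp12 n b (ltac:(lia)).
have Vvw : valid_word n (v ++ w) by rewrite valid_cat Vv Vw.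
move=> /(biorderable_conj Vvw Vb).
apply: (Hsub_adjacent_transp_not_biorderable (i := 1) isT le3n).
- by rewrite !valid_cat valid_winv valid_cat Vv Vw Vb.
- move=> x; rewrite perm_of_word_conj conj_perm_cat -Ev.
  by apply: eq_conj_perm => y; rewrite -Ew; apply: eq_conj_perm.
Qed.
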